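(* Let $\mathbb{E}$ be a finitely complete category, $\Sigma$ a fibrational class of split epimorphisms, and suppose $\mathbb{E}$ is a $\Sigma$-Mal'tsev category. Then $\mathbb{E}$ is action distinctive if and only if every $\Sigma$-equivalence relation $S$ on an object $X$ admits a centralizer.
   Context: A split epimorphism is a pair $(f,s)$ with $fs=1$. A class $\Sigma$ of split epimorphisms is fibrational if it contains all split epimorphisms $(f,s)$ with $f$ invertible and is stable under pullback along any morphism. A pair of morphisms with common codomain $Z$ is jointly extremally epic if it factors jointly through no non-invertible monomorphism into $Z$. $\mathbb{E}$ is $\Sigma$-Mal'tsev if for every split epimorphism $(f,s)\colon X\rightleftarrows Y$ in $\Sigma$ and every split epimorphism $(g,t)$ with $g\colon Y'\to Y$, letting $X'=Y'\times_YX$, $s'=(1_{Y'},sg)$, $\bar t=(tf,1_X)$, the pair $(s',\bar t)$ is jointly extremally epic. A $\Sigma$-relation is a reflexive relation $(d_0,d_1)\colon S\rightarrowtail X\times X$ with reflexivity $s_0$ such that $(d_0,s_0)\in\Sigma$; a $\Sigma$-equivalence relation is an equivalence relation which is a $\Sigma$-relation. The kernel relation of $f$ is denoted $R[f]$. A split epimorphism $(f,s)$ is $\Sigma$-special when $R[f]$ is a $\Sigma$-relation. For reflexive relations $R,S$ on $X$, $R\times_XS$ is the pullback of $d_0^S$ along $d_1^R$ (elements $xRySz$), $\sigma_0^R\colon R\to R\times_XS$, $xRy\mapsto xRySy$, $\sigma_0^S\colon S\to R\times_XS$, $ySz\mapsto yRySz$; $[R,S]=0$ means there is $p\colon R\times_XS\to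 X$ with $p\sigma_0^R=d_0^R$, $p\sigma_0^S=d_1^S$. The centralizer of a $\Sigma$-equivalence relation $S$ on $X$ is the largest equivalence relation $R$ on $X$ with $[R,S]=0$. A cartesian equivalence relation on a split epimorphism $(f,s)\colon X\rightleftarrows Y$ consists of equivalence relations $R_X$ on $X$ and $R_Y$ on $Y$ and a split epimorphism $(R_f,R_s)\colon R_X\rightleftarrows R_Y$ commuting with both projections $d_0,d_1$ and the reflexivity maps (so that it is an equivalence relation on $(f,s)$ in the category of split epimorphisms), such that for $i=0,1$ the square formed by $d_i^X\colon R_X\to X$, $d_i^Y\colon R_Y\to Y$, $R_f$ and $f$ is a pullback. $\mathbb{E}$ is action distinctive when, on every $\Sigma$-special split epimorphism $(f,s)$, there exists a largest (for inclusion) cartesian equivalence relation. *)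

Record Category := {
  Ob :> Type;
  Hom : Ob -> Ob -> Type;
  idm : forall a, Hom a a;
  comp : forall {a b c}, Hom b c -> Hom a b -> Hom a c;
  comp_id_l : forall a b (f : Hom a b), comp (idm b) f = f;
  comp_id_r : forall a b (f : Hom a b), comp f (idm a) = f;
  comp_assoc : forall a b c d (h : Hom c d) (g : Hom b c) (f : Hom a b),
      comp h (comp g f) = comp (comp h g) f
}.

Arguments Hom {C} a b : rename.
Arguments idm {C} a : rename.
Arguments comp {C a b c} g f : rename.

Declare Scope cat_scope.
Notation "g ∘ f" := (comp g f) (at level 40, left associativity) : cat_scope.
Open Scope cat_scope.

Section Cat.
Context {C : Category}.

Definition IsIso {A B : C} (f : Hom A B) : Prop :=
  exists g : Hom B A, g ∘ f = idm A /\ f ∘ g = idm B.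

Definition Mono {A B : C} (f : Hom A B) : Prop :=
  forall (Z : C) (u v : Hom Z A), f ∘ u = f ∘ v -> u = v.

Definition IsTerminal (T : C) : Prop :=
  forall A : C, exists! h : Hom A T, True.

Definition IsPullback {A B Z : C} (f : Hom A Z) (g : Hom B Z)
    (P : C) (p1 : Hom P A) (p2 : Hom P B) : Prop :=
  f ∘ p1 = g ∘ p2 /\
  forall (Q : C) (q1 : Hom Q A) (q2 : Hom Q B), f ∘ q1 = g ∘ q2 ->
    exists! u : Hom Q P, p1 ∘ u = q1 /\ p2 ∘ u = q2.

Definition FinitelyComplete : Prop :=
  (exists T : C, IsTerminal T) /\
  forall (A B Z : C) (f : Hom A Z) (g : Hom B Z),
    exists (P : C) (p1 : Hom P A) (p2 : Hom P B), IsPullback f g P p1 p2.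

Definition SplitClass : Type := forall X Y : C, Hom X Y -> Hom Y X -> Prop.

Definition Fibrational (Sigma : SplitClass) : Prop :=
  (forall X Y (f : Hom X Y) (s : Hom Y X), Sigma X Y f s -> f ∘ s = idm Y) /\
  (forall X Y (f : Hom X Y) (s : Hom Y X), f ∘ s = idm Y -> IsIso f -> Sigma X Y f s) /\
  (forall X Y (f : Hom X Y) (s : Hom Y X) Y' (g : Hom Y' Y)
          X' (f' : Hom X' Y') (g' : Hom X' X) (s' : Hom Y' X'),
      Sigma X Y f s -> IsPullback g f X' f' g' ->
      f' ∘ s' = idm Y' -> g' ∘ s' = s ∘ g -> Sigma X' Y' f' s').

Definition JointlyExtrEpic {A B Z : C} (a : Hom A Z) (b : Hom B Z) : Prop :=
  forall (M : C) (m : Hom M Z) (a' : Hom A M) (b' : Hom B M),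
    Mono m -> m ∘ a' = a -> m ∘ b' = b -> IsIso m.

(* X' = Y' x_Y X with projections f' : X' -> Y', g' : X' -> X;
   s' = (1, s g), tbar = (t f, 1) *)
Definition SigmaMaltsev (Sigma : SplitClass) : Prop :=
  forall X Y (f : Hom X Y) (s : Hom Y X) Y' (g : Hom Y' Y) (t : Hom Y Y')
         X' (f' : Hom X' Y') (g' : Hom X' X),
    Sigma X Y f s -> g ∘ t = idm Y -> IsPullback g f X' f' g' ->
    forall (s' : Hom Y' X') (tbar : Hom X X'),
      f' ∘ s' = idm Y' -> g' ∘ s' = s ∘ g ->
      f' ∘ tbar = t ∘ f -> g' ∘ tbar = idm X ->
      JointlyExtrEpic s' tbar.

(* A relation S >-> X x X is a jointly monic pair (d0, d1);
   a reflexive relation comes with its reflexivity s0. *)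
Record RRel (X : C) := mkRRel {
  rob : C;
  rd0 : Hom rob X;
  rd1 : Hom rob X;
  rs0 : Hom X rob
}.
Arguments rob {X} r.
Arguments rd0 {X} r.
Arguments rd1 {X} r.
Arguments rs0 {X} r.

Definition JointlyMonic {S X : C} (d0 d1 : Hom S X) : Prop :=
  forall (Z : C) (u v : Hom Z S), d0 ∘ u = d0 ∘ v -> d1 ∘ u = d1 ∘ v -> u = v.

Definition IsReflRel {X : C} (R : RRel X) : Prop :=
  JointlyMonic (rd0 R) (rd1 R) /\
  rd0 R ∘ rs0 R = idm X /\ rd1 R ∘ rs0 R = idm X.

Definition IsEquivRel {X : C} (R : RRel X) : Prop :=
  IsReflRel R /\
  (exists sg : Hom (rob R) (rob R), rd0 R ∘ sg = rd1 R /\ rd1 R ∘ sg = rd0 R) /\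
  (forall (P : C) (p1 p2 : Hom P (rob R)), IsPullback (rd1 R) (rd0 R) P p1 p2 ->
     exists tau : Hom P (rob R), rd0 R ∘ tau = rd0 R ∘ p1 /\ rd1 R ∘ tau = rd1 R ∘ p2).

Definition SigmaRel (Sigma : SplitClass) {X : C} (R : RRel X) : Prop :=
  IsReflRel R /\ Sigma (rob R) X (rd0 R) (rs0 R).

Definition SigmaEquivRel (Sigma : SplitClass) {X : C} (R : RRel X) : Prop :=
  IsEquivRel R /\ Sigma (rob R) X (rd0 R) (rs0 R).

Definition RelIncl {X : C} (R R' : RRel X) : Prop :=
  exists h : Hom (rob R) (rob R'), rd0 R' ∘ h = rd0 R /\ rd1 R' ∘ h = rd1 R.

(* [R, S] = 0 : R x_X S is the pullback of d0^S along d1^R (p1 to R, p2 to S);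
   sigma0^R : R -> R x_X S is the map with components (1, s0^S d1^R),
   sigma0^S : S -> R x_X S the map with components (s0^R d0^S, 1). *)
Definition Centralize {X : C} (R S : RRel X) : Prop :=
  forall (P : C) (p1 : Hom P (rob R)) (p2 : Hom P (rob S)),
    IsPullback (rd1 R) (rd0 S) P p1 p2 ->
    exists p : Hom P X,
      (forall u : Hom (rob R) P,
          p1 ∘ u = idm (rob R) -> p2 ∘ u = rs0 S ∘ rd1 R -> p ∘ u = rd0 R) /\
      (forall v : Hom (rob S) P,
          p1 ∘ v = rs0 R ∘ rd0 S -> p2 ∘ v = idm (rob S) -> p ∘ v = rd1 S).

Definition IsCentralizer {X : C} (S R : RRel X) : Prop :=
  IsEquivRel R /\ Centralize R S /\
  forall R' : RRel X, IsEquivRel R' -> Centralize R' S -> RelIncl R' R.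

Definition HasCentralizer {X : C} (S : RRel X) : Prop :=
  exists R : RRel X, IsCentralizer S R.

Definition IsKernelRel {X Y : C} (f : Hom X Y) (R : RRel X) : Prop :=
  IsPullback f f (rob R) (rd0 R) (rd1 R) /\
  rd0 R ∘ rs0 R = idm X /\ rd1 R ∘ rs0 R = idm X.

Definition SigmaSpecial (Sigma : SplitClass) {X Y : C} (f : Hom X Y) (s : Hom Y X) : Prop :=
  f ∘ s = idm Y /\ forall R : RRel X, IsKernelRel f R -> SigmaRel Sigma R.

Definition IsCartEq {X Y : C} (f : Hom X Y) (s : Hom Y X)
    (RX : RRel X) (RY : RRel Y) (Rf : Hom (rob RX) (rob RY)) (Rs : Hom (rob RY) (rob RX)) : Prop :=
  IsEquivRel RX /\ IsEquivRel RY /\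
  Rf ∘ Rs = idm (rob RY) /\
  rd0 RY ∘ Rf = f ∘ rd0 RX /\ rd1 RY ∘ Rf = f ∘ rd1 RX /\
  rd0 RX ∘ Rs = s ∘ rd0 RY /\ rd1 RX ∘ Rs = s ∘ rd1 RY /\
  Rf ∘ rs0 RX = rs0 RY ∘ f /\ Rs ∘ rs0 RY = rs0 RX ∘ s /\
  IsPullback f (rd0 RY) (rob RX) (rd0 RX) Rf /\
  IsPullback f (rd1 RY) (rob RX) (rd1 RX) Rf.

Definition HasLargestCartEq {X Y : C} (f : Hom X Y) (s : Hom Y X) : Prop :=
  exists (RX : RRel X) (RY : RRel Y) (Rf : Hom (rob RX) (rob RY)) (Rs : Hom (rob RY) (rob RX)),
    IsCartEq f s RX RY Rf Rs /\
    forall (RX' : RRel X) (RY' : RRel Y) (Rf' : Hom (rob RX') (rob RY'))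
           (Rs' : Hom (rob RY') (rob RX')),
      IsCartEq f s RX' RY' Rf' Rs' -> RelIncl RX' RX /\ RelIncl RY' RY.

Definition ActionDistinctive (Sigma : SplitClass) : Prop :=
  forall (X Y : C) (f : Hom X Y) (s : Hom Y X),
    SigmaSpecial Sigma f s -> HasLargestCartEq f s.

End Cat.

(* If S is a Sigma-equivalence relation, (d0, s0) : S <=> X is Sigma-special and the base of
   its largest cartesian equivalence relation is the centralizer of S: the base of any cartesian
   relation centralizes S, and conversely an equivalence relation R with connector p for
   [R, S] = 0 acts on S by (x R y, y S z) |-> x S p(x, y, z), which is a cartesian relation over R.
   If (f, s) is Sigma-special with kernel K and Z is the centralizer of K, the inverse image of Z
   along s acts on X by (x, f x R y) |-> p(s y, s f x, x); this is a cartesian relation, and the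
   largest one since every cartesian relation centralizes K, so lies in Z and has the restriction
   of p as its connector.  Both actions need the connector to be unique and associative, which is
   where the Sigma-Mal'tsev property enters: the two sections of a pulled back split epimorphism
   in Sigma are jointly epic. *)


Arguments rob {C X} r.
Arguments rd0 {C X} r.
Arguments rd1 {C X} r.
Arguments rs0 {C X} r.

Section Composition.
Context {C : Category}.

Lemma compA {a b c d : C} (h : Hom c d) (g : Hom b c) (f : Hom a b) :
  h ∘ (g ∘ f) = h ∘ g ∘ f.
Proof. apply comp_assoc. Qed.

Lemma comp_idl {a b : C} (f : Hom a b) : idm b ∘ f = f.
Proof. apply comp_id_l. Qed.

Lemma comp_idr {a b : C} (f : Hom a b) : f ∘ idm a = f.
Proof. apply comp_id_r. Qed.

Lemma whisker_r {a b c : C} {f : Hom b c} {g : Hom a b} {h : Hom a c} :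
  f ∘ g = h -> forall z (x : Hom z a), f ∘ (g ∘ x) = h ∘ x.
Proof. intros H z x. rewrite compA, H. reflexivity. Qed.

End Composition.

Ltac simpl_comp := repeat rewrite <- compA; rewrite ?comp_idl, ?comp_idr.

Section Limits.
Context {C : Category}.

Lemma pullback_square {A B Z P : C} {f : Hom A Z} {g : Hom B Z} {p1 : Hom P A} {p2 : Hom P B} :
  IsPullback f g P p1 p2 -> f ∘ p1 = g ∘ p2.
Proof. intros [H _]; exact H. Qed.

Lemma pullback_lift {A B Z P : C} {f : Hom A Z} {g : Hom B Z} {p1 : Hom P A} {p2 : Hom P B} :
  IsPullback f g P p1 p2 -> forall Q (q1 : Hom Q A) (q2 : Hom Q B), f ∘ q1 = g ∘ q2 ->
  exists u, p1 ∘ u = q1 /\ p2 ∘ u = q2.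
Proof. intros [_ Hu] Q q1 q2 H. destruct (Hu Q q1 q2 H) as [w [Hw _]]. eauto. Qed.

Lemma pullback_jointly_monic {A B Z P : C} {f : Hom A Z} {g : Hom B Z}
    {p1 : Hom P A} {p2 : Hom P B} :
  IsPullback f g P p1 p2 -> forall Q (u v : Hom Q P), p1 ∘ u = p1 ∘ v -> p2 ∘ u = p2 ∘ v -> u = v.
Proof.
  intros [Hc Hu] Q u v H1 H2.
  destruct (Hu Q (p1 ∘ v) (p2 ∘ v)) as [w [_ Hw]].
  { rewrite !compA, Hc. reflexivity. }
  rewrite <- (Hw u (conj H1 H2)). apply Hw. split; reflexivity.
Qed.

Lemma pullback_intro {A B Z P : C} {f : Hom A Z} {g : Hom B Z} {p1 : Hom P A} {p2 : Hom P B} :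
  f ∘ p1 = g ∘ p2 ->
  (forall Q (q1 : Hom Q A) (q2 : Hom Q B), f ∘ q1 = g ∘ q2 ->
     exists u, p1 ∘ u = q1 /\ p2 ∘ u = q2) ->
  (forall Q (u v : Hom Q P), p1 ∘ u = p1 ∘ v -> p2 ∘ u = p2 ∘ v -> u = v) ->
  IsPullback f g P p1 p2.
Proof.
  intros Hc He Hj. split; auto. intros Q q1 q2 H.
  destruct (He Q q1 q2 H) as [u [H1 H2]]. exists u. split; auto.
  intros v [H3 H4]. apply Hj; congruence.
Qed.

Hypothesis FC : @FinitelyComplete C.

Lemma pullback_exists {A B Z : C} (f : Hom A Z) (g : Hom B Z) :
  exists P (p1 : Hom P A) (p2 : Hom P B), IsPullback f g P p1 p2.
Proof. apply FC. Qed.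

Lemma product_exists (A B : C) : exists P (p1 : Hom P A) (p2 : Hom P B),
  (forall Q (q1 : Hom Q A) (q2 : Hom Q B), exists u, p1 ∘ u = q1 /\ p2 ∘ u = q2) /\
  (forall Q (u v : Hom Q P), p1 ∘ u = p1 ∘ v -> p2 ∘ u = p2 ∘ v -> u = v).
Proof.
  destruct FC as [[T HT] _].
  assert (to_T_unique : forall Q (x y : Hom Q T), x = y).
  { intros Q x y. destruct (HT Q) as [t [_ Ht]].
    rewrite <- (Ht x I). apply Ht; exact I. }
  destruct (HT A) as [tA _]. destruct (HT B) as [tB _].
  destruct (pullback_exists tA tB) as [P [p1 [p2 Hp]]].
  exists P, p1, p2. split.
  - intros Q q1 q2. apply (pullback_lift Hp). apply to_T_unique.
  - apply (pullback_jointly_monic Hp).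
Qed.

Lemma equalizer_exists {A Z : C} (u v : Hom A Z) : exists E (e : Hom E A),
  u ∘ e = v ∘ e /\ Mono e /\ forall Q (q : Hom Q A), u ∘ q = v ∘ q -> exists w, e ∘ w = q.
Proof.
  destruct (product_exists A Z) as [P [p1 [p2 [Plift Pjm]]]].
  destruct (Plift A (idm A) u) as [gu [Hu1 Hu2]].
  destruct (Plift A (idm A) v) as [gv [Hv1 Hv2]].
  destruct (pullback_exists gu gv) as [E [e1 [e2 He]]].
  assert (E12 : e1 = e2).
  { pose proof (f_equal (comp p1) (pullback_square He)) as H.
    rewrite !compA, Hu1, Hv1, !comp_idl in H. exact H. }
  exists E, e1. split; [|split].
  - pose proof (f_equal (comp p2) (pullback_square He)) as H.
    rewrite !compA, Hu2, Hv2 in H. rewrite H, E12. reflexivity.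
  - intros Q x y Hxy. apply (pullback_jointly_monic He); auto. rewrite <- E12. exact Hxy.
  - intros Q q Hq. destruct (pullback_lift He Q q q) as [w [Hw1 _]].
    + apply Pjm; rewrite !compA; [rewrite Hu1, Hv1 | rewrite Hu2, Hv2]; rewrite ?comp_idl; auto.
    + exists w; exact Hw1.
Qed.

End Limits.

Section Maltsev.
Context {C : Category} (Sigma : @SplitClass C).
Hypothesis FC : @FinitelyComplete C.
Hypothesis MS : SigmaMaltsev Sigma.

Section MaltsevSquare.
Context {X Y Y' X' : C} (f : Hom X Y) (s : Hom Y X) (g : Hom Y' Y) (t : Hom Y Y')
  (f' : Hom X' Y') (g' : Hom X' X) (s' : Hom Y' X') (tb : Hom X X').
Hypotheses (HS : Sigma X Y f s) (Hgt : g ∘ t = idm Y) (Hpb : IsPullback g f X' f' g')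
  (E1 : f' ∘ s' = idm Y') (E2 : g' ∘ s' = s ∘ g) (E3 : f' ∘ tb = t ∘ f) (E4 : g' ∘ tb = idm X).

Lemma maltsev_factor (X0 S0 : C) (d0 d1 : Hom S0 X0) (a b : Hom X' X0) :
  JointlyMonic d0 d1 ->
  (exists k1, d0 ∘ k1 = a ∘ s' /\ d1 ∘ k1 = b ∘ s') ->
  (exists k2, d0 ∘ k2 = a ∘ tb /\ d1 ∘ k2 = b ∘ tb) ->
  exists th, d0 ∘ th = a /\ d1 ∘ th = b.
Proof.
  intros Hjm [k1 [K11 K12]] [k2 [K21 K22]].
  (* the inverse image of the relation along (a, b) is a subobject of X' through which s' and tb factor *)
  destruct (pullback_exists FC d0 a) as [M1 [ms [mp Hm1]]].
  destruct (equalizer_exists FC (d1 ∘ ms) (b ∘ mp)) as [M [e [He [Hmo Hf]]]].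
  assert (Hmono : Mono (mp ∘ e)).
  { intros Q x y Hxy. rewrite <- !compA in Hxy. apply Hmo. apply (pullback_jointly_monic Hm1).
    - apply Hjm.
      + rewrite !compA, (pullback_square Hm1), <- !compA, Hxy. reflexivity.
      + rewrite !compA, He, <- !compA, Hxy. reflexivity.
    - exact Hxy. }
  destruct (pullback_lift Hm1 _ k1 s') as [x1 [X11 X12]]. { rewrite K11; reflexivity. }
  destruct (pullback_lift Hm1 _ k2 tb) as [x2 [X21 X22]]. { rewrite K21; reflexivity. }
  destruct (Hf _ x1) as [w1 Hw1]. { rewrite <- !compA, X11, X12, K12. reflexivity. }
  destruct (Hf _ x2) as [w2 Hw2]. { rewrite <- !compA, X21, X22, K22. reflexivity. }
  destruct (MS X Y f s Y' g t X' f' g' HS Hgt Hpb s' tb E1 E2 E3 E4 M (mp ∘ e) w1 w2 Hmono)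
    as [k [_ Hk]].
  { rewrite <- compA, Hw1, X12; reflexivity. }
  { rewrite <- compA, Hw2, X22; reflexivity. }
  exists (ms ∘ (e ∘ k)). split.
  - rewrite compA, (pullback_square Hm1), <- compA, (compA mp e k), Hk, comp_idr. reflexivity.
  - rewrite !compA, He, <- (compA b mp e), <- compA, Hk, comp_idr. reflexivity.
Qed.

Lemma maltsev_jointly_epic (Z : C) (u v : Hom X' Z) :
  u ∘ s' = v ∘ s' -> u ∘ tb = v ∘ tb -> u = v.
Proof.
  intros Hs Ht.
  destruct (maltsev_factor Z Z (idm Z) (idm Z) u v) as [w [<- <-]]; auto.
  - intros Q x y H _. rewrite !comp_idl in H. exact H.
  - exists (u ∘ s'). rewrite comp_idl, Hs. auto.
  - exists (u ∘ tb). rewrite comp_idl, Ht. auto.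
Qed.

End MaltsevSquare.
End Maltsev.

Section Relations.
Context {C : Category}.

Lemma equiv_jointly_monic {X : C} (R : RRel X) : IsEquivRel R -> JointlyMonic (rd0 R) (rd1 R).
Proof. intros [[H _] _]; exact H. Qed.

Lemma equiv_d0_s0 {X : C} (R : RRel X) : IsEquivRel R -> rd0 R ∘ rs0 R = idm X.
Proof. intros [[_ [H _]] _]; exact H. Qed.

Lemma equiv_d1_s0 {X : C} (R : RRel X) : IsEquivRel R -> rd1 R ∘ rs0 R = idm X.
Proof. intros [[_ [_ H]] _]; exact H. Qed.

Lemma equiv_sym {X : C} (R : RRel X) : IsEquivRel R ->
  exists sg : Hom (rob R) (rob R), rd0 R ∘ sg = rd1 R /\ rd1 R ∘ sg = rd0 R.
Proof. intros [_ [H _]]; exact H. Qed.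

Lemma equiv_trans (FC : @FinitelyComplete C) {X : C} (R : RRel X) : IsEquivRel R ->
  forall T (a b : Hom T (rob R)), rd1 R ∘ a = rd0 R ∘ b ->
  exists c, rd0 R ∘ c = rd0 R ∘ a /\ rd1 R ∘ c = rd1 R ∘ b.
Proof.
  intros [_ [_ Ht]] T a b Hab.
  destruct (pullback_exists FC (rd1 R) (rd0 R)) as [P [p1 [p2 Hp]]].
  destruct (Ht P p1 p2 Hp) as [tau [T1 T2]].
  destruct (pullback_lift Hp T a b Hab) as [u [U1 U2]].
  exists (tau ∘ u). rewrite !compA, T1, T2, <- !compA, U1, U2. auto.
Qed.

Lemma sym_involutive {X : C} (R : RRel X) (sg : Hom (rob R) (rob R)) :
  JointlyMonic (rd0 R) (rd1 R) -> rd0 R ∘ sg = rd1 R -> rd1 R ∘ sg = rd0 R ->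
  sg ∘ sg = idm _.
Proof.
  intros J H0 H1. apply J; rewrite compA; [rewrite H0, H1 | rewrite H1, H0]; rewrite comp_idr; auto.
Qed.

Lemma sym_refl {X : C} (R : RRel X) (sg : Hom (rob R) (rob R)) : IsReflRel R ->
  rd0 R ∘ sg = rd1 R -> rd1 R ∘ sg = rd0 R -> sg ∘ rs0 R = rs0 R.
Proof.
  intros [J [r0 r1]] H0 H1. apply J; rewrite compA; [rewrite H0 | rewrite H1]; rewrite ?r0, ?r1; auto.
Qed.

End Relations.

Section Connector.
Context {C : Category} (Sigma : @SplitClass C).
Hypothesis FC : @FinitelyComplete C.
Hypothesis MS : SigmaMaltsev Sigma.
Context {X : C} (R S : RRel X) (P : C) (p1 : Hom P (rob R)) (p2 : Hom P (rob S)).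
Hypotheses (HR : IsEquivRel R) (HSr : IsReflRel S) (HSs : Sigma (rob S) X (rd0 S) (rs0 S))
  (HP : IsPullback (rd1 R) (rd0 S) P p1 p2).

Let JS : JointlyMonic (rd0 S) (rd1 S) := proj1 HSr.
Let S0 : rd0 S ∘ rs0 S = idm X := proj1 (proj2 HSr).
Let S1 : rd1 S ∘ rs0 S = idm X := proj2 (proj2 HSr).
Let R0 : rd0 R ∘ rs0 R = idm X := equiv_d0_s0 R HR.
Let R1 : rd1 R ∘ rs0 R = idm X := equiv_d1_s0 R HR.

Lemma sigma0R_exists : exists u : Hom (rob R) P, p1 ∘ u = idm _ /\ p2 ∘ u = rs0 S ∘ rd1 R.
Proof. apply (pullback_lift HP). rewrite compA, S0, comp_idl, comp_idr. reflexivity. Qed.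

Lemma sigma0S_exists : exists u : Hom (rob S) P, p1 ∘ u = rs0 R ∘ rd0 S /\ p2 ∘ u = idm _.
Proof. apply (pullback_lift HP). rewrite compA, R1, comp_idl, comp_idr. reflexivity. Qed.

Lemma sigma0_jointly_epic (Z : C) (u v : Hom P Z) :
  (forall w, p1 ∘ w = idm _ -> p2 ∘ w = rs0 S ∘ rd1 R -> u ∘ w = v ∘ w) ->
  (forall w, p1 ∘ w = rs0 R ∘ rd0 S -> p2 ∘ w = idm _ -> u ∘ w = v ∘ w) -> u = v.
Proof.
  intros H1 H2.
  destruct sigma0R_exists as [a [A1 A2]]. destruct sigma0S_exists as [b [B1 B2]].
  apply (maltsev_jointly_epic Sigma FC MS (rd0 S) (rs0 S) (rd1 R) (rs0 R) p1 p2 a b); auto.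
Qed.

Lemma connector_unique (p p' : Hom P X) :
  (forall u, p1 ∘ u = idm _ -> p2 ∘ u = rs0 S ∘ rd1 R -> p ∘ u = rd0 R) ->
  (forall v, p1 ∘ v = rs0 R ∘ rd0 S -> p2 ∘ v = idm _ -> p ∘ v = rd1 S) ->
  (forall u, p1 ∘ u = idm _ -> p2 ∘ u = rs0 S ∘ rd1 R -> p' ∘ u = rd0 R) ->
  (forall v, p1 ∘ v = rs0 R ∘ rd0 S -> p2 ∘ v = idm _ -> p' ∘ v = rd1 S) ->
  p = p'.
Proof.
  intros HpR HpS HpR' HpS'. apply sigma0_jointly_epic.
  - intros w W1 W2. rewrite HpR, HpR'; auto.
  - intros w W1 W2. rewrite HpS, HpS'; auto.
Qed.

Context (p : Hom P X).
Hypotheses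
  (HpR : forall u : Hom (rob R) P, p1 ∘ u = idm _ -> p2 ∘ u = rs0 S ∘ rd1 R -> p ∘ u = rd0 R)
  (HpS : forall v : Hom (rob S) P, p1 ∘ v = rs0 R ∘ rd0 S -> p2 ∘ v = idm _ -> p ∘ v = rd1 S).

Lemma connector_restrict (R' : RRel X) (h : Hom (rob R') (rob R)) (P' : C)
    (p1' : Hom P' (rob R')) (p2' : Hom P' (rob S)) (hh : Hom P' P) :
  IsReflRel R' -> rd0 R ∘ h = rd0 R' -> rd1 R ∘ h = rd1 R' ->
  p1 ∘ hh = h ∘ p1' -> p2 ∘ hh = p2' ->
  (forall u, p1' ∘ u = idm _ -> p2' ∘ u = rs0 S ∘ rd1 R' -> p ∘ hh ∘ u = rd0 R') /\
  (forall v, p1' ∘ v = rs0 R' ∘ rd0 S -> p2' ∘ v = idm _ -> p ∘ hh ∘ v = rd1 S).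
Proof.
  intros [_ [R'0 R'1]] Hh0 Hh1 HH1 HH2.
  destruct sigma0R_exists as [a [A1 A2]]. destruct sigma0S_exists as [b [B1 B2]].
  split.
  - intros u U1 U2.
    assert (E : hh ∘ u = a ∘ h).
    { apply (pullback_jointly_monic HP); simpl_comp;
        rewrite ?(whisker_r HH1), ?(whisker_r HH2), ?(whisker_r A1), ?(whisker_r A2); simpl_comp;
        rewrite ?U1, ?U2; simpl_comp; rewrite ?Hh1; auto. }
    rewrite <- compA, E, compA, HpR, Hh0; auto.
  - intros v V1 V2.
    assert (Hr : h ∘ rs0 R' = rs0 R).
    { apply (equiv_jointly_monic R HR); simpl_comp;
        rewrite ?(whisker_r Hh0), ?(whisker_r Hh1), ?R'0, ?R'1, ?R0, ?R1; auto. }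
    assert (E : hh ∘ v = b).
    { apply (pullback_jointly_monic HP); simpl_comp;
        rewrite ?(whisker_r HH1), ?(whisker_r HH2), ?B1, ?B2; simpl_comp;
        rewrite ?V1, ?V2; simpl_comp; auto.
      rewrite compA, Hr. auto. }
    rewrite <- compA, E, HpS; auto.
Qed.

Lemma connector_lift : exists th : Hom P (rob S), rd0 S ∘ th = rd0 R ∘ p1 /\ rd1 S ∘ th = p.
Proof.
  destruct sigma0R_exists as [a [A1 A2]]. destruct sigma0S_exists as [b [B1 B2]].
  apply (maltsev_factor Sigma FC MS (rd0 S) (rs0 S) (rd1 R) (rs0 R) p1 p2 a b); auto.
  - exists (rs0 S ∘ rd0 R).
    rewrite compA, S0, comp_idl, (compA (rd1 S)), S1, comp_idl, <- compA, A1, comp_idr.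
    rewrite HpR; auto.
  - exists (idm _). rewrite <- compA, B1, compA, R0, comp_idl, HpS, !comp_idr; auto.
Qed.

Context (th : Hom P (rob S)) (T0 : rd0 S ∘ th = rd0 R ∘ p1) (T1 : rd1 S ∘ th = p).

Lemma connector_lift_sigma0R (w : Hom (rob R) P) :
  p1 ∘ w = idm _ -> p2 ∘ w = rs0 S ∘ rd1 R -> th ∘ w = rs0 S ∘ rd0 R.
Proof.
  intros W1 W2. apply JS; simpl_comp;
    rewrite ?(whisker_r T0), ?(whisker_r T1), ?(whisker_r S0), ?(whisker_r S1), ?comp_idl; simpl_comp.
  - rewrite W1; simpl_comp; reflexivity.
  - apply HpR; auto.
Qed.

Lemma connector_lift_sigma0S (w : Hom (rob S) P) :
  p1 ∘ w = rs0 R ∘ rd0 S -> p2 ∘ w = idm _ -> th ∘ w = idm _.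
Proof.
  intros W1 W2. apply JS; simpl_comp;
    rewrite ?(whisker_r T0), ?(whisker_r T1), ?(whisker_r S0), ?(whisker_r S1); simpl_comp.
  - rewrite W1, compA, R0, comp_idl; reflexivity.
  - apply HpS; auto.
Qed.

(* W is the object of configurations x R y R z S w; by the Mal'tsev property it suffices to
   test the configurations with z = w and those with x = y = z *)
Lemma connector_assoc_universal (R2 : C) (q1 q2 : Hom R2 (rob R))
    (tau : Hom R2 (rob R)) (W : C) (w1 : Hom W R2) (w2 : Hom W (rob S))
    (ai ao ar : Hom W P) :
  IsPullback (rd1 R) (rd0 R) R2 q1 q2 ->
  rd0 R ∘ tau = rd0 R ∘ q1 -> rd1 R ∘ tau = rd1 R ∘ q2 ->
  IsPullback (rd1 R ∘ q2) (rd0 S) W w1 w2 ->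
  p1 ∘ ai = q2 ∘ w1 -> p2 ∘ ai = w2 ->
  p1 ∘ ao = q1 ∘ w1 -> p2 ∘ ao = th ∘ ai ->
  p1 ∘ ar = tau ∘ w1 -> p2 ∘ ar = w2 ->
  p ∘ ao = p ∘ ar.
Proof.
  intros HR2 Ta0 Ta1 HW Ai1 Ai2 Ao1 Ao2 Ar1 Ar2.
  pose proof (pullback_square HR2) as CR2.
  destruct (pullback_lift HR2 X (rs0 R) (rs0 R)) as [t [Q1t Q2t]]. { rewrite R0, R1; auto. }
  assert (Hgt : (rd1 R ∘ q2) ∘ t = idm X). { rewrite <- compA, Q2t, R1; auto. }
  destruct (pullback_lift HW R2 (idm _) (rs0 S ∘ (rd1 R ∘ q2))) as [sW [SW1 SW2]].
  { rewrite compA, S0, comp_idl, comp_idr; auto. }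
  destruct (pullback_lift HW (rob S) (t ∘ rd0 S) (idm _)) as [tW [TW1 TW2]].
  { rewrite compA, Hgt, comp_idl, comp_idr; auto. }
  destruct (sigma0R_exists) as [a [A1 A2]]. destruct (sigma0S_exists) as [b [B1 B2]].
  apply (maltsev_jointly_epic Sigma FC MS (rd0 S) (rs0 S) (rd1 R ∘ q2) t w1 w2 sW tW); auto.
  - assert (E1 : ai ∘ sW = a ∘ q2).
    { apply (pullback_jointly_monic HP); simpl_comp;
        rewrite ?(whisker_r Ai1), ?(whisker_r Ai2), ?(whisker_r A1), ?(whisker_r A2); simpl_comp;
        rewrite ?SW1, ?SW2; simpl_comp; auto. }
    assert (E2 : ao ∘ sW = a ∘ q1).
    { apply (pullback_jointly_monic HP); simpl_comp;
        rewrite ?(whisker_r Ao1), ?(whisker_r Ao2), ?(whisker_r A1), ?(whisker_r A2); simpl_comp;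
        rewrite ?SW1, ?E1; simpl_comp; auto.
      rewrite compA, connector_lift_sigma0R; auto. simpl_comp. rewrite CR2. auto. }
    assert (E3 : ar ∘ sW = a ∘ tau).
    { apply (pullback_jointly_monic HP); simpl_comp;
        rewrite ?(whisker_r Ar1), ?(whisker_r Ar2), ?(whisker_r A1), ?(whisker_r A2); simpl_comp;
        rewrite ?SW1, ?SW2; simpl_comp; auto. rewrite Ta1. auto. }
    simpl_comp. rewrite E2, E3, !compA, !HpR; auto.
  - assert (E1 : ai ∘ tW = b).
    { apply (pullback_jointly_monic HP); simpl_comp;
        rewrite ?(whisker_r Ai1), ?(whisker_r Ai2), ?B1, ?B2; simpl_comp;
        rewrite ?TW1, ?TW2; simpl_comp; auto. rewrite (whisker_r Q2t). auto. }
    assert (E2 : ao ∘ tW = b).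
    { apply (pullback_jointly_monic HP); simpl_comp;
        rewrite ?(whisker_r Ao1), ?(whisker_r Ao2), ?B1, ?B2; simpl_comp;
        rewrite ?TW1, ?E1; simpl_comp; auto.
      rewrite (whisker_r Q1t). auto. apply connector_lift_sigma0S; auto. }
    assert (Tt : tau ∘ t = rs0 R).
    { apply (equiv_jointly_monic R HR); simpl_comp;
        rewrite ?(whisker_r Ta0), ?(whisker_r Ta1); simpl_comp; rewrite ?Q1t, ?Q2t, ?R0, ?R1; auto. }
    assert (E3 : ar ∘ tW = b).
    { apply (pullback_jointly_monic HP); simpl_comp;
        rewrite ?(whisker_r Ar1), ?(whisker_r Ar2), ?B1, ?B2; simpl_comp;
        rewrite ?TW1, ?TW2; simpl_comp; auto. rewrite (whisker_r Tt). auto. }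
    simpl_comp. rewrite E2, E3. auto.
Qed.

Lemma connector_assoc (T : C) (r1 r2 r : Hom T (rob R)) (c : Hom T (rob S)) (pi po pr : Hom T P) :
  rd1 R ∘ r1 = rd0 R ∘ r2 ->
  rd0 R ∘ r = rd0 R ∘ r1 -> rd1 R ∘ r = rd1 R ∘ r2 ->
  p1 ∘ pi = r2 -> p2 ∘ pi = c -> p1 ∘ po = r1 -> p2 ∘ po = th ∘ pi ->
  p1 ∘ pr = r -> p2 ∘ pr = c -> p ∘ po = p ∘ pr.
Proof.
  intros H12 Hr0 Hr1 Pi1 Pi2 Po1 Po2 Pr1 Pr2.
  destruct (pullback_exists FC (rd1 R) (rd0 R)) as [R2 [q1 [q2 HR2]]].
  destruct ((proj2 (proj2 HR)) R2 q1 q2 HR2) as [tau [Ta0 Ta1]].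
  destruct (pullback_exists FC (rd1 R ∘ q2) (rd0 S)) as [W [w1 [w2 HW]]].
  pose proof (pullback_square HW) as CW. pose proof (pullback_square HR2) as CR2.
  rewrite <- compA in CW.
  destruct (pullback_lift HP W (q2 ∘ w1) w2 CW) as [ai [Ai1 Ai2]].
  destruct (pullback_lift HP W (q1 ∘ w1) (th ∘ ai)) as [ao [Ao1 Ao2]].
  { simpl_comp; rewrite (whisker_r CR2), (whisker_r T0); simpl_comp; rewrite Ai1; auto. }
  destruct (pullback_lift HP W (tau ∘ w1) w2) as [ar [Ar1 Ar2]].
  { rewrite compA, Ta1; simpl_comp; auto. }
  pose proof (connector_assoc_universal R2 q1 q2 tau W w1 w2 ai ao ar HR2 Ta0 Ta1 HW
                Ai1 Ai2 Ao1 Ao2 Ar1 Ar2) as Main.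
  destruct (pullback_lift HR2 T r1 r2 H12) as [y [Y1 Y2]].
  destruct (pullback_lift HW T y c) as [x [X1 X2]].
  { rewrite <- compA, Y2, <- Pi1, <- Pi2, !compA, (pullback_square HP). auto. }
  assert (Ei : pi = ai ∘ x).
  { apply (pullback_jointly_monic HP); simpl_comp;
      rewrite ?(whisker_r Ai1), ?(whisker_r Ai2); simpl_comp; rewrite ?X1, ?X2; auto.
    rewrite Y2; auto. }
  assert (Eo : po = ao ∘ x).
  { apply (pullback_jointly_monic HP); simpl_comp;
      rewrite ?(whisker_r Ao1), ?(whisker_r Ao2); simpl_comp; rewrite ?X1, ?Y1, <- ?Ei; auto. }
  assert (Er : pr = ar ∘ x).
  { apply (pullback_jointly_monic HP); simpl_comp;
      rewrite ?(whisker_r Ar1), ?(whisker_r Ar2); simpl_comp; rewrite ?X1, ?X2; auto.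
    rewrite Pr1. apply (equiv_jointly_monic R HR); simpl_comp;
      rewrite ?(whisker_r Ta0), ?(whisker_r Ta1); simpl_comp; rewrite ?Y1, ?Y2; auto. }
  rewrite Eo, Er, !compA, Main. auto.
Qed.

End Connector.

Section Action.
Context {C : Category}.
Hypothesis FC : @FinitelyComplete C.
Context {E B : C} (f : Hom E B) (s : Hom B E) (Hfs : f ∘ s = idm B).
Context (R : RRel B) (HR : IsEquivRel R).
Context (Q : C) (q1 : Hom Q E) (q2 : Hom Q (rob R)) (HQ : IsPullback f (rd0 R) Q q1 q2).
Context (act : Hom Q E).
Hypotheses (act_base : f ∘ act = rd1 R ∘ q2)
  (act_unit : forall u : Hom E Q, q1 ∘ u = idm _ -> q2 ∘ u = rs0 R ∘ f -> act ∘ u = idm _)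
  (act_split : forall u : Hom (rob R) Q, q1 ∘ u = s ∘ rd0 R -> q2 ∘ u = idm _ ->
     act ∘ u = s ∘ rd1 R)
  (act_compose : forall T (x y z : Hom T Q), act ∘ x = q1 ∘ y -> q1 ∘ z = q1 ∘ x ->
     rd1 R ∘ (q2 ∘ z) = rd1 R ∘ (q2 ∘ y) -> act ∘ z = act ∘ y).
Context (r0 : Hom E Q) (r0a : q1 ∘ r0 = idm _) (r0b : q2 ∘ r0 = rs0 R ∘ f).
Context (Rs : Hom (rob R) Q) (Rsa : q1 ∘ Rs = s ∘ rd0 R) (Rsb : q2 ∘ Rs = idm _).

Let JR : JointlyMonic (rd0 R) (rd1 R) := equiv_jointly_monic R HR.
Let CQ : f ∘ q1 = rd0 R ∘ q2 := pullback_square HQ.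

Lemma action_jointly_monic T (u v : Hom T Q) : q1 ∘ u = q1 ∘ v -> act ∘ u = act ∘ v -> u = v.
Proof.
  intros H1 H2. apply (pullback_jointly_monic HQ); auto. apply JR.
  - rewrite !compA, <- CQ, <- !compA, H1. auto.
  - rewrite !compA, <- act_base, <- !compA, H2. auto.
Qed.

Section Inverse.
Context (sg : Hom (rob R) (rob R)) (G0 : rd0 R ∘ sg = rd1 R) (G1 : rd1 R ∘ sg = rd0 R).

Lemma action_inverse_exists T (x : Hom T Q) :
  exists y, q1 ∘ y = act ∘ x /\ q2 ∘ y = sg ∘ (q2 ∘ x).
Proof.
  apply (pullback_lift HQ). simpl_comp. rewrite (whisker_r act_base), (whisker_r G0). simpl_comp. auto.
Qed.

Lemma action_inverse T (x y : Hom T Q) :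
  q1 ∘ y = act ∘ x -> q2 ∘ y = sg ∘ (q2 ∘ x) -> act ∘ y = q1 ∘ x.
Proof.
  intros Y1 Y2.
  rewrite <- (act_compose T x y (r0 ∘ (q1 ∘ x))).
  - rewrite compA, act_unit, comp_idl; auto.
  - symmetry; exact Y1.
  - rewrite compA, r0a, comp_idl. auto.
  - rewrite Y2, (whisker_r r0b); simpl_comp. rewrite (whisker_r G1), (whisker_r (equiv_d1_s0 R HR)).
    rewrite comp_idl, (whisker_r CQ), compA. auto.
Qed.

End Inverse.

Lemma action_equiv : IsEquivRel (mkRRel E Q q1 act r0).
Proof.
  destruct (equiv_sym R HR) as [sg [G0 G1]].
  unfold IsEquivRel, IsReflRel, JointlyMonic; cbn [rob rd0 rd1 rs0].
  split; [split; [|split]|split].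
  - intros T u v; apply action_jointly_monic.
  - exact r0a.
  - apply act_unit; auto.
  - destruct (action_inverse_exists sg G0 Q (idm Q)) as [y [Y1 Y2]]. exists y. split.
    + rewrite Y1, comp_idr. auto.
    + rewrite <- (comp_idr q1). apply (action_inverse sg G1); rewrite ?Y1, ?Y2; auto.
  - intros P p1 p2 HP.
    destruct (equiv_trans FC R HR P (q2 ∘ p1) (q2 ∘ p2)) as [r [Rr0 Rr1]].
    { rewrite (compA (rd1 R)), (compA (rd0 R)), <- act_base, <- CQ; simpl_comp;
      rewrite (pullback_square HP); auto. }
    destruct (pullback_lift HQ P (q1 ∘ p1) r) as [z [Z1 Z2]].
    { rewrite Rr0, compA, CQ. simpl_comp. auto. }
    exists z. split; auto. apply (act_compose P p1 p2 z); auto.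
    + exact (pullback_square HP).
    + rewrite Z2. exact Rr1.
Qed.

(* a point x over d1 r is the action of r on the action of r^-1 on x *)
Lemma action_pullback_d1 : IsPullback f (rd1 R) Q act q2.
Proof.
  destruct (equiv_sym R HR) as [sg [G0 G1]].
  apply pullback_intro.
  - exact act_base.
  - intros T w1 w2 Hw.
    destruct (pullback_lift HQ T w1 (sg ∘ w2)) as [u0 [U1 U2]].
    { rewrite Hw, compA, G0. auto. }
    destruct (action_inverse_exists sg G0 T u0) as [y [Y1 Y2]].
    exists y. split.
    + rewrite <- U1. apply (action_inverse sg G1); auto.
    + rewrite Y2, U2, compA, (sym_involutive R sg JR G0 G1), comp_idl. auto.
  - intros T u v H1 H2.
    destruct (action_inverse_exists sg G0 T u) as [yu [Yu1 Yu2]].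
    destruct (action_inverse_exists sg G0 T v) as [yv [Yv1 Yv2]].
    assert (yu = yv).
    { apply (pullback_jointly_monic HQ); [rewrite Yu1, Yv1 | rewrite Yu2, Yv2, H2]; auto. }
    apply action_jointly_monic; auto.
    rewrite <- (action_inverse sg G1 T u yu), <- (action_inverse sg G1 T v yv); subst; auto.
Qed.

Lemma action_cartesian : IsCartEq f s (mkRRel E Q q1 act r0) R q2 Rs.
Proof.
  unfold IsCartEq; cbn [rob rd0 rd1 rs0].
  split; [exact action_equiv|]. split; [exact HR|].
  split; [exact Rsb|]. split; [symmetry; exact CQ|]. split; [symmetry; exact act_base|].
  split; [exact Rsa|]. split; [apply act_split; auto|]. split; [exact r0b|].
  split.
  { apply (pullback_jointly_monic HQ); simpl_comp;
      rewrite ?(whisker_r Rsa), ?(whisker_r Rsb), ?(whisker_r r0a), ?(whisker_r r0b); simpl_comp;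
      rewrite ?(equiv_d0_s0 R HR), ?Hfs; simpl_comp; auto. }
  split; [exact HQ | exact action_pullback_d1].
Qed.

End Action.

Section Forward.
Context {C : Category} (Sigma : @SplitClass C).
Hypothesis FC : @FinitelyComplete C.
Hypothesis Fib : Fibrational Sigma.
Hypothesis MS : SigmaMaltsev Sigma.

(* R[d0] is a pullback of (d0, s0) along d1, via (a, b) |-> (a, a^-1 b) *)
Lemma sigma_equiv_d0_special {X : C} (S : RRel X) :
  SigmaEquivRel Sigma S -> SigmaSpecial Sigma (rd0 S) (rs0 S).
Proof.
  intros [HS HSs]. pose proof (equiv_jointly_monic S HS) as JS.
  destruct (equiv_sym S HS) as [sg [G0 G1]].
  split; [apply (equiv_d0_s0 S HS)|].
  intros R [HK [K0 K1]].
  assert (JR : JointlyMonic (rd0 R) (rd1 R)) by (intros T u v; apply (pullback_jointly_monic HK)).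
  split; [split; auto|].
  destruct (equiv_trans FC S HS _ (sg ∘ rd0 R) (rd1 R)) as [gg [Gg0 Gg1]].
  { rewrite compA, G1. exact (pullback_square HK). }
  rewrite compA, G0 in Gg0.
  destruct Fib as [_ [_ Fstable]].
  apply (Fstable (rob S) X (rd0 S) (rs0 S) (rob S) (rd1 S) (rob R) (rd0 R) gg (rs0 R) HSs); auto.
  - apply pullback_intro.
    + symmetry; exact Gg0.
    + intros T q1 q2 Hq.
      destruct (equiv_trans FC S HS T q1 q2 Hq) as [c [C0 C1]].
      destruct (pullback_lift HK T q1 c) as [u [U1 U2]]. { auto. }
      exists u. split; auto. apply JS; simpl_comp.
      * rewrite (whisker_r Gg0); simpl_comp; rewrite U1. auto.
      * rewrite (whisker_r Gg1); simpl_comp; rewrite U2. auto.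
    + intros T u v H1 H2. apply (pullback_jointly_monic HK); auto. apply JS.
      * rewrite !compA, <- (pullback_square HK), <- !compA, H1. auto.
      * rewrite !compA, <- Gg1, <- !compA, H2. auto.
  - apply JS; simpl_comp.
    + rewrite (whisker_r Gg0); simpl_comp; rewrite ?K0, ?(whisker_r (equiv_d0_s0 S HS)); simpl_comp; auto.
    + rewrite (whisker_r Gg1); simpl_comp; rewrite ?K1, ?(whisker_r (equiv_d1_s0 S HS)); simpl_comp; auto.
Qed.

Lemma cartesian_base_centralizes {X : C} (S : RRel X) RX RY Rf Rs :
  IsReflRel S -> IsCartEq (rd0 S) (rs0 S) RX RY Rf Rs -> Centralize RY S.
Proof.
  intros [_ [_ S1]] [HX [_ [FS [F0 [F1 [Sa [Sb [Fr [_ [_ Pb1]]]]]]]]]] P p1 p2 HP.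
  destruct (pullback_lift Pb1 P p2 p1) as [xi [Xi1 Xi2]]. { symmetry; exact (pullback_square HP). }
  exists (rd1 S ∘ (rd0 RX ∘ xi)). split.
  - intros u U1 U2. assert (E : xi ∘ u = Rs).
    { apply (pullback_jointly_monic Pb1); simpl_comp;
        rewrite ?(whisker_r Xi1), ?(whisker_r Xi2), ?U1, ?U2; auto. }
    simpl_comp. rewrite E, Sa, (whisker_r S1). simpl_comp. auto.
  - intros v V1 V2. assert (E : xi ∘ v = rs0 RX).
    { apply (pullback_jointly_monic Pb1); simpl_comp;
        rewrite ?(whisker_r Xi1), ?(whisker_r Xi2), ?V1, ?V2, ?Fr; auto.
      rewrite (equiv_d1_s0 RX HX). auto. }
    simpl_comp. rewrite E, (equiv_d0_s0 RX HX), comp_idr. auto.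
Qed.

Section CentralizingAction.
Context {X : C} (S R : RRel X) (HS : IsEquivRel S) (HSs : Sigma (rob S) X (rd0 S) (rs0 S))
  (HR : IsEquivRel R).
Context (P : C) (p1 : Hom P (rob R)) (p2 : Hom P (rob S)) (HP : IsPullback (rd1 R) (rd0 S) P p1 p2).
Context (p : Hom P X).
Hypotheses
  (HpR : forall u : Hom (rob R) P, p1 ∘ u = idm _ -> p2 ∘ u = rs0 S ∘ rd1 R -> p ∘ u = rd0 R)
  (HpS : forall v : Hom (rob S) P, p1 ∘ v = rs0 R ∘ rd0 S -> p2 ∘ v = idm _ -> p ∘ v = rd1 S).
Context (th : Hom P (rob S)) (T0 : rd0 S ∘ th = rd0 R ∘ p1) (T1 : rd1 S ∘ th = p).
Context (sg : Hom (rob R) (rob R)) (G0 : rd0 R ∘ sg = rd1 R) (G1 : rd1 R ∘ sg = rd0 R).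
Context (Q : C) (q1 : Hom Q (rob S)) (q2 : Hom Q (rob R)) (HQ : IsPullback (rd0 S) (rd0 R) Q q1 q2).
Context (k : Hom Q P) (K1 : p1 ∘ k = sg ∘ q2) (K2 : p2 ∘ k = q1).

Let HSr : IsReflRel S := proj1 HS.
Let JS : JointlyMonic (rd0 S) (rd1 S) := equiv_jointly_monic S HS.
Let S0 : rd0 S ∘ rs0 S = idm X := equiv_d0_s0 S HS.
Let CQ : rd0 S ∘ q1 = rd0 R ∘ q2 := pullback_square HQ.

(* (y S z, y R x) acts as (x S p(x, y, z)) *)
Lemma centralizing_action_base : rd0 S ∘ (th ∘ k) = rd1 R ∘ q2.
Proof. rewrite compA, T0, <- compA, K1, compA, G0. auto. Qed.

Lemma centralizing_action_unit (u : Hom (rob S) Q) :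
  q1 ∘ u = idm _ -> q2 ∘ u = rs0 R ∘ rd0 S -> th ∘ k ∘ u = idm _.
Proof.
  intros U1 U2. simpl_comp.
  apply (connector_lift_sigma0S R S P p1 p2 HR HSr p HpS th T0 T1).
  - rewrite (whisker_r K1); simpl_comp; rewrite U2, compA, (sym_refl R sg (proj1 HR) G0 G1). auto.
  - rewrite (whisker_r K2), U1. auto.
Qed.

Lemma centralizing_action_split (u : Hom (rob R) Q) :
  q1 ∘ u = rs0 S ∘ rd0 R -> q2 ∘ u = idm _ -> th ∘ k ∘ u = rs0 S ∘ rd1 R.
Proof.
  intros U1 U2. destruct (sigma0R_exists R S P p1 p2 HSr HP) as [a [A1 A2]].
  assert (E : k ∘ u = a ∘ sg).
  { apply (pullback_jointly_monic HP); simpl_comp;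
      rewrite ?(whisker_r K1), ?(whisker_r K2), ?(whisker_r A1), ?(whisker_r A2); simpl_comp;
      rewrite ?U1, ?U2, ?G1; simpl_comp; auto. }
  apply JS; simpl_comp.
  - rewrite (whisker_r T0), E. simpl_comp. rewrite (whisker_r A1). simpl_comp.
    rewrite G0, (whisker_r S0). simpl_comp. auto.
  - rewrite (whisker_r T1), E, compA, HpR, G0; auto.
    rewrite (whisker_r (equiv_d1_s0 S HS)). simpl_comp. auto.
Qed.

Lemma centralizing_action_compose T (x y z : Hom T Q) :
  th ∘ k ∘ x = q1 ∘ y -> q1 ∘ z = q1 ∘ x -> rd1 R ∘ (q2 ∘ z) = rd1 R ∘ (q2 ∘ y) ->
  th ∘ k ∘ z = th ∘ k ∘ y.
Proof.
  intros Hxy Hz1 Hr1.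
  assert (Hr0 : rd0 R ∘ (q2 ∘ z) = rd0 R ∘ (q2 ∘ x)).
  { rewrite !compA, <- CQ, <- !compA, Hz1. auto. }
  assert (Ey : rd0 R ∘ (q2 ∘ y) = rd1 R ∘ (q2 ∘ x)).
  { rewrite (compA (rd0 R)), <- CQ, <- compA, <- Hxy, compA, centralizing_action_base.
    simpl_comp. auto. }
  apply JS; simpl_comp.
  - rewrite !(whisker_r T0); simpl_comp; rewrite !(whisker_r K1); simpl_comp;
      rewrite !(whisker_r G0), Hr1. auto.
  - rewrite !(whisker_r T1). symmetry.
    apply (connector_assoc Sigma FC MS R S P p1 p2 HR HSr HSs HP p HpR HpS th T0 T1 T
             (sg ∘ (q2 ∘ y)) (sg ∘ (q2 ∘ x)) (sg ∘ (q2 ∘ z)) (q1 ∘ x) (k ∘ x) (k ∘ y) (k ∘ z));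
      simpl_comp; rewrite ?(whisker_r K1), ?(whisker_r K2); simpl_comp;
      rewrite ?(whisker_r G0), ?(whisker_r G1), ?Hz1; simpl_comp; auto.
    rewrite <- Hxy. simpl_comp. auto.
Qed.

End CentralizingAction.

Lemma cartesian_of_centralizing {X : C} (S R : RRel X) : SigmaEquivRel Sigma S ->
  IsEquivRel R -> Centralize R S ->
  exists RX Rf Rs, IsCartEq (rd0 S) (rs0 S) RX R Rf Rs.
Proof.
  intros [HS HSs] HR Hc.
  destruct (equiv_sym R HR) as [sg [G0 G1]].
  destruct (pullback_exists FC (rd1 R) (rd0 S)) as [P [p1 [p2 HP]]].
  destruct (Hc P p1 p2 HP) as [p [HpR HpS]].
  destruct (connector_lift Sigma FC MS R S P p1 p2 HR (proj1 HS) HSs HP p HpR HpS) as [th [T0 T1]].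
  destruct (pullback_exists FC (rd0 S) (rd0 R)) as [Q [q1 [q2 HQ]]].
  destruct (pullback_lift HP Q (sg ∘ q2) q1) as [k [K1 K2]].
  { rewrite compA, G1, (pullback_square HQ). auto. }
  destruct (pullback_lift HQ (rob S) (idm _) (rs0 R ∘ rd0 S)) as [r0 [r0a r0b]].
  { rewrite compA, (equiv_d0_s0 R HR), comp_idl, comp_idr. auto. }
  destruct (pullback_lift HQ (rob R) (rs0 S ∘ rd0 R) (idm _)) as [Rs [Rsa Rsb]].
  { rewrite compA, (equiv_d0_s0 S HS), comp_idl, comp_idr. auto. }
  exists (mkRRel _ Q q1 (th ∘ k) r0), q2, Rs.
  apply (action_cartesian FC (rd0 S) (rs0 S) (equiv_d0_s0 S HS) R HR Q q1 q2 HQ (th ∘ k)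
           (centralizing_action_base S R P p1 th T0 sg G0 Q q2 k K1)); auto.
  - eapply centralizing_action_unit; eassumption.
  - eapply centralizing_action_split; eassumption.
  - eapply centralizing_action_compose; eassumption.
Qed.

Lemma centralizer_of_action_distinctive : ActionDistinctive Sigma ->
  forall (X : C) (S : RRel X), SigmaEquivRel Sigma S -> HasCentralizer S.
Proof.
  intros AD X S HS.
  destruct (AD _ _ _ _ (sigma_equiv_d0_special S HS)) as [RX [RY [Rf [Rs [Hc Hmax]]]]].
  exists RY. split; [exact (proj1 (proj2 Hc))|]. split.
  - exact (cartesian_base_centralizes S RX RY Rf Rs (proj1 (proj1 HS)) Hc).
  - intros R' HR' Hc'. destruct (cartesian_of_centralizing S R' HS HR' Hc') as [RX' [Rf' [Rs' H']]].
    exact (proj2 (Hmax _ _ _ _ H')).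
Qed.

End Forward.

Section KernelAndInverseImage.
Context {C : Category}.
Hypothesis FC : @FinitelyComplete C.

Lemma kernel_relation_exists {X Y : C} (f : Hom X Y) :
  exists K : RRel X, IsKernelRel f K /\ IsEquivRel K.
Proof.
  destruct (pullback_exists FC f f) as [K0 [k0 [k1 HK]]].
  destruct (pullback_lift HK X (idm _) (idm _)) as [kd [D0 D1]]. { auto. }
  exists (mkRRel _ K0 k0 k1 kd). cbn [rob rd0 rd1 rs0].
  split; [split; auto|].
  split; [split; [intros T u v; apply (pullback_jointly_monic HK) | auto]|split].
  - destruct (pullback_lift HK K0 k1 k0) as [sg [G0 G1]]. { symmetry; exact (pullback_square HK). }
    exists sg; auto.
  - intros P p1 p2 HP. cbn [rob rd0 rd1 rs0] in *.
    apply (pullback_lift HK).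
    rewrite compA, (pullback_square HK), <- compA, (pullback_square HP), compA, (pullback_square HK).
    simpl_comp. auto.
Qed.

(* the connector of [RX, K] sends x RX y K z to the x' with x' RX z over the same element of RY as x RX y *)
Lemma cartesian_kernel_connector {X Y : C} (f : Hom X Y) (s : Hom Y X) RX RY Rf Rs (K : RRel X) :
  IsCartEq f s RX RY Rf Rs -> IsKernelRel f K ->
  forall P (p1 : Hom P (rob RX)) (p2 : Hom P (rob K)), IsPullback (rd1 RX) (rd0 K) P p1 p2 ->
  exists eta : Hom P (rob RX), rd1 RX ∘ eta = rd1 K ∘ p2 /\ Rf ∘ eta = Rf ∘ p1 /\
   (forall u, p1 ∘ u = idm _ -> p2 ∘ u = rs0 K ∘ rd1 RX -> rd0 RX ∘ eta ∘ u = rd0 RX) /\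
   (forall v, p1 ∘ v = rs0 RX ∘ rd0 K -> p2 ∘ v = idm _ -> rd0 RX ∘ eta ∘ v = rd1 K).
Proof.
  intros [HX [_ [_ [_ [F1 [_ [_ [Fr [_ [_ Pb1]]]]]]]]]] [HK [_ K1]] P p1 p2 HP.
  pose proof (pullback_square HK) as KC.
  destruct (pullback_lift Pb1 P (rd1 K ∘ p2) (Rf ∘ p1)) as [eta [E1 E2]].
  { rewrite compA, <- KC, <- compA, <- (pullback_square HP), compA, <- F1. simpl_comp. auto. }
  exists eta. split; auto. split; auto. split.
  - intros u U1 U2.
    assert (E : eta ∘ u = idm _).
    { apply (pullback_jointly_monic Pb1); simpl_comp;
        rewrite ?(whisker_r E1), ?(whisker_r E2); simpl_comp;
        rewrite ?U1, ?U2; simpl_comp; rewrite ?(whisker_r K1); simpl_comp; auto. }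
    rewrite <- compA, E, comp_idr. auto.
  - intros v V1 V2.
    assert (E : eta ∘ v = rs0 RX ∘ rd1 K).
    { apply (pullback_jointly_monic Pb1); simpl_comp;
        rewrite ?(whisker_r E1), ?(whisker_r E2); simpl_comp;
        rewrite ?V1, ?V2; simpl_comp; rewrite ?(whisker_r (equiv_d1_s0 RX HX)); simpl_comp; auto.
      rewrite (whisker_r Fr), (whisker_r Fr). simpl_comp. rewrite KC. auto. }
    rewrite <- compA, E, compA, (equiv_d0_s0 RX HX), comp_idl. auto.
Qed.

Lemma cartesian_centralizes_kernel {X Y : C} (f : Hom X Y) (s : Hom Y X) RX RY Rf Rs (K : RRel X) :
  IsCartEq f s RX RY Rf Rs -> IsKernelRel f K -> Centralize RX K.
Proof.
  intros Hc HK P p1 p2 HP.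
  destruct (cartesian_kernel_connector f s RX RY Rf Rs K Hc HK P p1 p2 HP) as [eta [_ [_ H]]].
  exists (rd0 RX ∘ eta). exact H.
Qed.

Section InverseImage.
Context {X Y : C} (Z : RRel X) (s : Hom Y X) (HZ : IsEquivRel Z).
Context (W1 : C) (a1 : Hom W1 (rob Z)) (a2 : Hom W1 Y) (HW1 : IsPullback (rd0 Z) s W1 a1 a2).
Context (W : C) (b1 : Hom W W1) (b2 : Hom W Y) (HW : IsPullback (rd1 Z ∘ a1) s W b1 b2).

Lemma inverse_image_d0 : rd0 Z ∘ (a1 ∘ b1) = s ∘ (a2 ∘ b1).
Proof. rewrite !compA, (pullback_square HW1). auto. Qed.

Lemma inverse_image_d1 : rd1 Z ∘ (a1 ∘ b1) = s ∘ b2.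
Proof. rewrite compA. exact (pullback_square HW). Qed.

Lemma inverse_image_lift T (z : Hom T (rob Z)) (y y' : Hom T Y) :
  rd0 Z ∘ z = s ∘ y -> rd1 Z ∘ z = s ∘ y' ->
  exists w, a2 ∘ b1 ∘ w = y /\ b2 ∘ w = y' /\ a1 ∘ b1 ∘ w = z.
Proof.
  intros H0 H1.
  destruct (pullback_lift HW1 T z y H0) as [w1 [U1 U2]].
  destruct (pullback_lift HW T w1 y') as [w [V1 V2]]. { rewrite <- compA, U1. auto. }
  exists w. rewrite <- !compA, V1, U1, U2. auto.
Qed.

Lemma inverse_image_jointly_monic : JointlyMonic (a2 ∘ b1) b2.
Proof.
  intros T u v H1 H2. rewrite <- !compA in H1.
  apply (pullback_jointly_monic HW); auto. apply (pullback_jointly_monic HW1); auto.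
  apply (equiv_jointly_monic Z HZ).
  - rewrite !compA, (pullback_square HW1), <- !compA, H1. auto.
  - rewrite (compA a1 b1 u), (compA a1 b1 v), !(whisker_r inverse_image_d1), <- !compA, H2. auto.
Qed.

Lemma inverse_image_equiv (r0 : Hom Y W) :
  a2 ∘ b1 ∘ r0 = idm Y -> b2 ∘ r0 = idm Y -> IsEquivRel (mkRRel Y W (a2 ∘ b1) b2 r0).
Proof.
  intros R01 R02.
  unfold IsEquivRel, IsReflRel; cbn [rob rd0 rd1 rs0].
  split; [split; [exact inverse_image_jointly_monic | split; auto]|split].
  - destruct (equiv_sym Z HZ) as [sg [G0 G1]].
    destruct (inverse_image_lift W (sg ∘ (a1 ∘ b1)) b2 (a2 ∘ b1)) as [w [Wa [Wb _]]].
    { rewrite compA, G0, inverse_image_d1. auto. }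
    { rewrite compA, G1, inverse_image_d0. auto. }
    exists w. auto.
  - intros P p1 p2 HP. cbn [rob rd0 rd1 rs0] in *.
    destruct (equiv_trans FC Z HZ P (a1 ∘ (b1 ∘ p1)) (a1 ∘ (b1 ∘ p2))) as [c [Cc0 Cc1]].
    { rewrite !(compA a1 b1), (whisker_r inverse_image_d1), (whisker_r inverse_image_d0).
      simpl_comp. rewrite (pullback_square HP). simpl_comp. auto. }
    destruct (inverse_image_lift P c (a2 ∘ (b1 ∘ p1)) (b2 ∘ p2)) as [w [Wa [Wb _]]].
    { rewrite Cc0, (compA a1 b1), (whisker_r inverse_image_d0). simpl_comp. auto. }
    { rewrite Cc1, (compA a1 b1), (whisker_r inverse_image_d1). simpl_comp. auto. }
    exists w. split; [rewrite Wa | rewrite Wb]; simpl_comp; auto.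
Qed.

End InverseImage.

Lemma inverse_image_exists {X Y : C} (Z : RRel X) (s : Hom Y X) : IsEquivRel Z ->
  exists (RY : RRel Y) (zt : Hom (rob RY) (rob Z)), IsEquivRel RY /\
    rd0 Z ∘ zt = s ∘ rd0 RY /\ rd1 Z ∘ zt = s ∘ rd1 RY /\
    (forall T (z : Hom T (rob Z)) (y y' : Hom T Y), rd0 Z ∘ z = s ∘ y -> rd1 Z ∘ z = s ∘ y' ->
       exists w, rd0 RY ∘ w = y /\ rd1 RY ∘ w = y' /\ zt ∘ w = z).
Proof.
  intros HZ.
  destruct (pullback_exists FC (rd0 Z) s) as [W1 [a1 [a2 HW1]]].
  destruct (pullback_exists FC (rd1 Z ∘ a1) s) as [W [b1 [b2 HW]]].
  destruct (inverse_image_lift Z s W1 a1 a2 HW1 W b1 b2 HW Y (rs0 Z ∘ s) (idm _) (idm _))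
    as [r0 [R01 [R02 _]]].
  { rewrite compA, (equiv_d0_s0 Z HZ), comp_idl, comp_idr. auto. }
  { rewrite compA, (equiv_d1_s0 Z HZ), comp_idl, comp_idr. auto. }
  exists (mkRRel Y W (a2 ∘ b1) b2 r0), (a1 ∘ b1). cbn [rob rd0 rd1 rs0].
  split; [exact (inverse_image_equiv Z s HZ W1 a1 a2 HW1 W b1 b2 HW r0 R01 R02)|].
  split; [exact (inverse_image_d0 Z s W1 a1 a2 HW1 W b1)|].
  split; [exact (inverse_image_d1 Z s W1 a1 W b1 b2 HW)|].
  apply (inverse_image_lift Z s W1 a1 a2 HW1 W b1 b2 HW).
Qed.
End KernelAndInverseImage.

Section Backward.
Context {C : Category} (Sigma : @SplitClass C).
Hypothesis FC : @FinitelyComplete C.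
Hypothesis MS : SigmaMaltsev Sigma.
Context {X Y : C} (f : Hom X Y) (s : Hom Y X) (Hfs : f ∘ s = idm Y).
Context (K : RRel X) (HKk : IsKernelRel f K) (HKr : IsReflRel K)
  (HKs : Sigma (rob K) X (rd0 K) (rs0 K)).
Context (Z : RRel X) (HZ : IsEquivRel Z).
Context (P : C) (p1 : Hom P (rob Z)) (p2 : Hom P (rob K)) (HP : IsPullback (rd1 Z) (rd0 K) P p1 p2).
Context (p : Hom P X).
Hypotheses
  (HpR : forall u : Hom (rob Z) P, p1 ∘ u = idm _ -> p2 ∘ u = rs0 K ∘ rd1 Z -> p ∘ u = rd0 Z)
  (HpS : forall v : Hom (rob K) P, p1 ∘ v = rs0 Z ∘ rd0 K -> p2 ∘ v = idm _ -> p ∘ v = rd1 K).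
Context (th : Hom P (rob K)) (T0 : rd0 K ∘ th = rd0 Z ∘ p1) (T1 : rd1 K ∘ th = p).
Context (sgZ : Hom (rob Z) (rob Z)) (G0 : rd0 Z ∘ sgZ = rd1 Z) (G1 : rd1 Z ∘ sgZ = rd0 Z).
Context (RY : RRel Y) (zt : Hom (rob RY) (rob Z)) (HRY : IsEquivRel RY)
  (Z0 : rd0 Z ∘ zt = s ∘ rd0 RY) (Z1 : rd1 Z ∘ zt = s ∘ rd1 RY).
Context (Q : C) (q1 : Hom Q X) (q2 : Hom Q (rob RY)) (HQ : IsPullback f (rd0 RY) Q q1 q2).
Context (ka : Hom Q (rob K)) (Ka0 : rd0 K ∘ ka = s ∘ (f ∘ q1)) (Ka1 : rd1 K ∘ ka = q1).
Context (kk : Hom Q P) (KK1 : p1 ∘ kk = sgZ ∘ (zt ∘ q2)) (KK2 : p2 ∘ kk = ka).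

Let JK : JointlyMonic (rd0 K) (rd1 K) := proj1 HKr.
Let JZ : JointlyMonic (rd0 Z) (rd1 Z) := equiv_jointly_monic Z HZ.
Let KC : f ∘ rd0 K = f ∘ rd1 K := pullback_square (proj1 HKk).
Let CQ : f ∘ q1 = rd0 RY ∘ q2 := pullback_square HQ.

(* an element x over y R y' acts as p(s y', s y, x) *)
Lemma kernel_action_base : f ∘ (p ∘ kk) = rd1 RY ∘ q2.
Proof.
  rewrite <- T1. simpl_comp. rewrite (compA f (rd1 K)), <- KC. simpl_comp.
  rewrite (whisker_r T0). simpl_comp. rewrite KK1, (whisker_r G0), (whisker_r Z1). simpl_comp.
  rewrite (whisker_r Hfs). simpl_comp. auto.
Qed.

Lemma kernel_action_unit (u : Hom X Q) :
  q1 ∘ u = idm _ -> q2 ∘ u = rs0 RY ∘ f -> p ∘ kk ∘ u = idm _.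
Proof.
  intros U1 U2.
  assert (ZR : zt ∘ rs0 RY = rs0 Z ∘ s).
  { apply JZ; simpl_comp;
      rewrite ?(whisker_r Z0), ?(whisker_r Z1), ?(whisker_r (equiv_d0_s0 Z HZ)),
        ?(whisker_r (equiv_d1_s0 Z HZ)); simpl_comp;
      rewrite ?(equiv_d0_s0 RY HRY), ?(equiv_d1_s0 RY HRY); simpl_comp; auto. }
  destruct (sigma0S_exists Z K P p1 p2 HZ HP) as [b [B1 B2]].
  assert (E : kk ∘ u = b ∘ (ka ∘ u)).
  { apply (pullback_jointly_monic HP); simpl_comp;
      rewrite ?(whisker_r KK1), ?(whisker_r KK2), ?(whisker_r B1), ?(whisker_r B2); simpl_comp; auto.
    rewrite U2; simpl_comp. rewrite (whisker_r ZR); simpl_comp.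
    rewrite (whisker_r (sym_refl Z sgZ (proj1 HZ) G0 G1)); simpl_comp.
    rewrite (whisker_r Ka0); simpl_comp; rewrite U1; simpl_comp; auto. }
  rewrite <- compA, E, (compA p b), HpS; auto. rewrite (whisker_r Ka1), U1. auto.
Qed.

Lemma kernel_action_split (u : Hom (rob RY) Q) :
  q1 ∘ u = s ∘ rd0 RY -> q2 ∘ u = idm _ -> p ∘ kk ∘ u = s ∘ rd1 RY.
Proof.
  intros U1 U2.
  destruct (sigma0R_exists Z K P p1 p2 HKr HP) as [a [A1 A2]].
  assert (E : kk ∘ u = a ∘ (sgZ ∘ zt)).
  { apply (pullback_jointly_monic HP); simpl_comp;
      rewrite ?(whisker_r KK1), ?(whisker_r KK2), ?(whisker_r A1), ?(whisker_r A2); simpl_comp;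
      rewrite ?U2; simpl_comp; auto.
    apply JK; simpl_comp; rewrite ?(whisker_r Ka0), ?(whisker_r Ka1), ?(whisker_r (proj1 (proj2 HKr))),
      ?(whisker_r (proj2 (proj2 HKr))); simpl_comp; rewrite ?(whisker_r G1), ?U1, ?Z0; simpl_comp; auto.
    rewrite (whisker_r Hfs). simpl_comp. auto. }
  rewrite <- compA, E, (compA p a), HpR, (whisker_r G0), Z1; auto.
Qed.

Lemma kernel_action_compose T (x y z : Hom T Q) :
  p ∘ kk ∘ x = q1 ∘ y -> q1 ∘ z = q1 ∘ x -> rd1 RY ∘ (q2 ∘ z) = rd1 RY ∘ (q2 ∘ y) ->
  p ∘ kk ∘ z = p ∘ kk ∘ y.
Proof.
  intros Hxy Hz1 Hr1. simpl_comp. symmetry.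
  assert (Hr0 : rd0 RY ∘ (q2 ∘ z) = rd0 RY ∘ (q2 ∘ x)).
  { rewrite !compA, <- CQ, <- !compA, Hz1. auto. }
  assert (Ey : rd0 RY ∘ (q2 ∘ y) = rd1 RY ∘ (q2 ∘ x)).
  { rewrite (compA (rd0 RY)), <- CQ, <- compA, <- Hxy, compA, kernel_action_base. simpl_comp. auto. }
  assert (Hth : ka ∘ y = th ∘ (kk ∘ x)).
  { apply JK; simpl_comp.
    - rewrite (whisker_r Ka0), (whisker_r T0); simpl_comp.
      rewrite <- Hxy, (whisker_r kernel_action_base); simpl_comp. rewrite (whisker_r KK1); simpl_comp.
      rewrite (whisker_r G0), (whisker_r Z1); simpl_comp. auto.
    - rewrite (whisker_r Ka1), (whisker_r T1), <- Hxy. simpl_comp. auto. }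
  apply (connector_assoc Sigma FC MS Z K P p1 p2 HZ HKr HKs HP p HpR HpS th T0 T1 T
           (sgZ ∘ (zt ∘ (q2 ∘ y))) (sgZ ∘ (zt ∘ (q2 ∘ x))) (sgZ ∘ (zt ∘ (q2 ∘ z))) (ka ∘ x)
           (kk ∘ x) (kk ∘ y) (kk ∘ z));
    simpl_comp; rewrite ?(whisker_r KK1), ?(whisker_r KK2); simpl_comp;
    rewrite ?(whisker_r G0), ?(whisker_r G1); simpl_comp;
    rewrite ?(whisker_r Z0), ?(whisker_r Z1); simpl_comp; rewrite ?Ey, ?Hr0, ?Hr1, ?Hth; auto.
  apply JK; simpl_comp; rewrite ?(whisker_r Ka0), ?(whisker_r Ka1); simpl_comp; rewrite ?Hz1; auto.
Qed.

Lemma kernel_action_cartesian (r0 : Hom X Q) (Rs : Hom (rob RY) Q) :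
  q1 ∘ r0 = idm _ -> q2 ∘ r0 = rs0 RY ∘ f -> q1 ∘ Rs = s ∘ rd0 RY -> q2 ∘ Rs = idm _ ->
  IsCartEq f s (mkRRel X Q q1 (p ∘ kk) r0) RY q2 Rs.
Proof.
  intros r0a r0b Rsa Rsb.
  apply (action_cartesian FC f s Hfs RY HRY Q q1 q2 HQ (p ∘ kk) kernel_action_base
           kernel_action_unit kernel_action_split kernel_action_compose); assumption.
Qed.

(* on RX' the connector p restricts to that of [RX', K], which returns x' from (s f x', s f x, x) *)
Lemma kernel_action_on_cartesian RX' RY' Rf' Rs' (h : Hom (rob RX') (rob Z))
    (j : Hom (rob RY') (rob RY)) (m : Hom (rob RX') Q) :
  IsCartEq f s RX' RY' Rf' Rs' -> rd0 Z ∘ h = rd0 RX' -> rd1 Z ∘ h = rd1 RX' ->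
  zt ∘ j = h ∘ Rs' -> q1 ∘ m = rd0 RX' -> q2 ∘ m = j ∘ Rf' ->
  p ∘ kk ∘ m = rd1 RX'.
Proof.
  intros Hc' Hh0 Hh1 J2 M1 M2.
  pose proof Hc' as [HX' [HY' [FS [F0 [F1 [Sa [_ [_ [_ [_ Pb1]]]]]]]]]].
  destruct (equiv_sym RX' HX') as [sgX [X0 X1]].
  destruct (pullback_exists FC (rd1 RX') (rd0 K)) as [P' [p1' [p2' HP']]].
  destruct (cartesian_kernel_connector f s RX' RY' Rf' Rs' K Hc' HKk P' p1' p2' HP')
    as [eta [E1 [E2 [Hconn0 Hconn1]]]].
  destruct (pullback_lift HP P' (h ∘ p1') p2') as [hh [HH1 HH2]].
  { rewrite compA, Hh1. exact (pullback_square HP'). }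
  assert (Hrestr : p ∘ hh = rd0 RX' ∘ eta).
  { destruct (connector_restrict Z K P p1 p2 HZ HKr HP p HpR HpS RX' h P' p1' p2' hh
                (proj1 HX') Hh0 Hh1 HH1 HH2) as [HR' HS'].
    exact (connector_unique Sigma FC MS RX' K P' p1' p2' HX' HKr HKs HP' _ _ HR' HS' Hconn0 Hconn1). }
  destruct (pullback_lift HP' (rob RX') (sgX ∘ (Rs' ∘ Rf')) (ka ∘ m)) as [e [Ee1 Ee2]].
  { rewrite compA, X1, compA, Sa, (whisker_r Ka0); simpl_comp; rewrite M1, F0. auto. }
  assert (Ek : kk ∘ m = hh ∘ e).
  { apply (pullback_jointly_monic HP); simpl_comp;
      rewrite ?(whisker_r KK1), ?(whisker_r KK2), ?(whisker_r HH1), ?(whisker_r HH2); simpl_comp;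
      rewrite ?M2, ?Ee1, ?Ee2; auto.
    rewrite (whisker_r J2). simpl_comp. rewrite compA.
    assert (sgZ ∘ h = h ∘ sgX) as ->; [|simpl_comp; auto].
    apply JZ; simpl_comp;
      rewrite ?(whisker_r G0), ?(whisker_r G1), ?(whisker_r Hh0), ?(whisker_r Hh1), ?Hh0, ?Hh1, ?X0, ?X1;
      auto. }
  assert (Ee : eta ∘ e = sgX).
  { destruct (equiv_sym RY' HY') as [sgY' [Y0 Y1]].
    assert (RS : Rf' ∘ sgX = sgY' ∘ Rf').
    { apply (equiv_jointly_monic RY' HY'); simpl_comp;
        rewrite ?(whisker_r F0), ?(whisker_r F1), ?(whisker_r Y0), ?(whisker_r Y1); simpl_comp;
        rewrite ?X0, ?X1, ?F0, ?F1; auto. }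
    apply (pullback_jointly_monic Pb1); simpl_comp;
      rewrite ?(whisker_r E1), ?(whisker_r E2); simpl_comp; rewrite ?Ee1, ?Ee2, ?X1; simpl_comp.
    - rewrite (whisker_r Ka1), M1. auto.
    - rewrite (whisker_r RS); simpl_comp; rewrite (whisker_r FS); simpl_comp; rewrite RS. auto. }
  simpl_comp. rewrite Ek, (compA p hh), Hrestr. simpl_comp. rewrite Ee, X0. auto.
Qed.

Lemma kernel_action_largest (r0 : Hom X Q) RX' RY' Rf' Rs' :
  (forall T (z : Hom T (rob Z)) (y y' : Hom T Y), rd0 Z ∘ z = s ∘ y -> rd1 Z ∘ z = s ∘ y' ->
     exists w, rd0 RY ∘ w = y /\ rd1 RY ∘ w = y' /\ zt ∘ w = z) ->
  IsCartEq f s RX' RY' Rf' Rs' -> RelIncl RX' Z ->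
  RelIncl RX' (mkRRel X Q q1 (p ∘ kk) r0) /\ RelIncl RY' RY.
Proof.
  intros ZW Hc' [h [Hh0 Hh1]].
  pose proof Hc' as [_ [_ [_ [F0 [_ [Sa [Sb _]]]]]]].
  destruct (ZW _ (h ∘ Rs') (rd0 RY') (rd1 RY')) as [j [J0 [J1 J2]]].
  { rewrite compA, Hh0, Sa. auto. }
  { rewrite compA, Hh1, Sb. auto. }
  split; [|exists j; auto].
  destruct (pullback_lift HQ (rob RX') (rd0 RX') (j ∘ Rf')) as [m [M1 M2]].
  { rewrite compA, J0, F0. auto. }
  exists m. cbn [rob rd0 rd1 rs0]. split; [exact M1|].
  exact (kernel_action_on_cartesian RX' RY' Rf' Rs' h j m Hc' Hh0 Hh1 J2 M1 M2).
Qed.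

End Backward.

Lemma action_distinctive_of_centralizers {C : Category} (Sigma : @SplitClass C) :
  @FinitelyComplete C -> SigmaMaltsev Sigma ->
  (forall (X : C) (S : RRel X), SigmaEquivRel Sigma S -> HasCentralizer S) ->
  ActionDistinctive Sigma.
Proof.
  intros FC MS HC X Y f s [Hfs Hsp].
  destruct (kernel_relation_exists FC f) as [K [HKk HKe]].
  destruct (Hsp K HKk) as [HKr HKs].
  destruct (HC X K (conj HKe HKs)) as [Z [HZ [HZc HZmax]]].
  destruct (pullback_exists FC (rd1 Z) (rd0 K)) as [P [p1 [p2 HP]]].
  destruct (HZc P p1 p2 HP) as [p [HpR HpS]].
  destruct (connector_lift Sigma FC MS Z K P p1 p2 HZ HKr HKs HP p HpR HpS) as [th [T0 T1]].
  destruct (equiv_sym Z HZ) as [sgZ [G0 G1]].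
  destruct (inverse_image_exists FC Z s HZ) as [RY [zt [HRY [Z0 [Z1 ZW]]]]].
  destruct (pullback_exists FC f (rd0 RY)) as [Q [q1 [q2 HQ]]].
  destruct (pullback_lift (proj1 HKk) Q (s ∘ (f ∘ q1)) q1) as [ka [Ka0 Ka1]].
  { rewrite compA, Hfs, comp_idl. auto. }
  destruct (pullback_lift HP Q (sgZ ∘ (zt ∘ q2)) ka) as [kk [KK1 KK2]].
  { rewrite compA, G1, (whisker_r Z0), Ka0, (pullback_square HQ). simpl_comp. auto. }
  destruct (pullback_lift HQ X (idm _) (rs0 RY ∘ f)) as [r0 [r0a r0b]].
  { rewrite compA, (equiv_d0_s0 RY HRY), comp_idl, comp_idr. auto. }
  destruct (pullback_lift HQ (rob RY) (s ∘ rd0 RY) (idm _)) as [Rs [Rsa Rsb]].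
  { rewrite compA, Hfs, comp_idl, comp_idr. auto. }
  exists (mkRRel X Q q1 (p ∘ kk) r0), RY, q2, Rs. split.
  - eapply kernel_action_cartesian; eassumption.
  - intros RX' RY' Rf' Rs' Hc'.
    eapply kernel_action_largest; try eassumption.
    exact (HZmax RX' (proj1 Hc') (cartesian_centralizes_kernel f s RX' RY' Rf' Rs' K Hc' HKk)).
Qed.

Theorem theorem5p5 (C : Category) (Sigma : @SplitClass C) :
  @FinitelyComplete C -> Fibrational Sigma -> SigmaMaltsev Sigma ->
  (ActionDistinctive Sigma <->
   forall (X : C) (S : RRel X), SigmaEquivRel Sigma S -> HasCentralizer S).
Proof.
  intros FC Fib MS. split.
  - exact (centralizer_of_action_distinctive Sigma FC Fib MS).
  - exact (action_distinctive_of_centralizers Sigma FC MS).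
Qed.
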